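(* The numbers $s_k(m)$ and $s(m)$ satisfy: (i) $s(0)=1$; (ii) $s_0(1)=1$ and $s_k(1)=0$ for $k>0$; (iii) $s_0(2)=0$, $s_1(2)=1$ and $s_k(2)=0$ for $k>1$; (iv) for every integer $m\ge1$: $s_m(2^m)=1$, $$s_{m-1}(2^m)=\sum_{j=0}^{m-1}\sum_{k=0}^{m-2}s_k\big(2^m-(2^{m-1}+\dots+2^j)\big),$$ and $s_k(2^m)=0$ for $k\ne m,m-1$; (v) for every integer $m\ge1$ and $l=0,1,\dots,m-1$: $$s_m(2^m+\dots+2^l)=1+\sum_{j=l}^{m-1}\sum_{k=0}^{m-1}s_k(2^j+\dots+2^l),$$ $$s_{m-1}(2^m+\dots+2^l)=\sum_{j=0}^{m-1}\sum_{k=0}^{m-2}s_k\big((2^m+\dots+2^l)-(2^{m-1}+\dots+2^j)\big),$$ and $s_k(2^m+\dots+2^l)=0$ for $k\ne m,m-1$; (vi) for $l=2,3,\dots,m-1$ and $a_0,\dots,a_{l-2}\in\{0,1\}$ not all $0$, writing $A=a_{l-2}2^{l-2}+\dots+a_02^0$: $$s_m(2^m+\dots+2^l+A)=\sum_{k=0}^{m-1}s_k(A)+\sum_{j=l}^{m-1}\sum_{k=0}^{m-1}s_k(2^j+\dots+2^l+A),$$ $$s_{m-1}(2^m+\dots+2^l+A)=\sum_{j=0}^{m-1}\sum_{k=0}^{m-2}s_k\big((2^m+\dots+2^l+A)-(2^{m-1}+\dots+2^j)\big),$$ and $s_k(2^m+\dots+2^l+A)=0$ for $k\ne m,m-1$;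 (vii) for $m>1$ and $a_0,\dots,a_{m-2}\in\{0,1\}$ not all $0$, writing $B=a_{m-2}2^{m-2}+\dots+a_02^0$: $$s_m(2^m+B)=\sum_{k=0}^{m-1}s_k(B),$$ $$s_{m-1}(2^m+B)=\sum_{j=0}^{m-1}\sum_{k=0}^{m-2}s_k\big((2^m+B)-(2^{m-1}+\dots+2^j)\big),$$ and $s_k(2^m+B)=0$ for $k\ne m,m-1$.
   Context: For a natural number $m>0$ and $k\in\{0,1,2,\dots\}$, $S_k(m)$ is the set of all finite sequences $((m_1,l_1),\dots,(m_t,l_t))$ with $t\ge1$ of pairs of natural numbers such that $k=m_1>m_2>\dots>m_t\ge0$, $m_j\ge l_j\ge0$ for all $j$, and $m=\sum_{j=1}^t\sum_{p=0}^{l_j}2^{m_j-p}$; $s_k(m)=|S_k(m)|$. For $m>0$, $s(m)=\sum_{k\ge0}s_k(m)$ (a finite sum, since $s_k(m)=0$ for all but finitely many $k$), and $s(0)=1$ by convention. Empty sums are $0$. *)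

From mathcomp Require Import all_boot.
Set Implicit Arguments. Unset Strict Implicit. Unset Printing Implicit Defensive.

Definition pair_val (q : nat * nat) : nat := \sum_(0 <= p < q.2.+1) 2 ^ (q.1 - p).

Definition inS (k m : nat) (s : seq (nat * nat)) : bool :=
  [&& 0 < m, s != [::], (head (0, 0) s).1 == k,
      sorted (fun a b : nat * nat => b.1 < a.1) s,
      all (fun q : nat * nat => q.2 <= q.1) s
    & m == sumn (map pair_val s)].

Fixpoint allseqs (T : Type) (A : seq T) (n : nat) : seq (seq T) :=
  match n with
  | 0 => [:: [::]]
  | n'.+1 => [seq x :: s | x <- A, s <- allseqs A n']
  end.

Definition pairs (k : nat) : seq (nat * nat) :=
  [seq (i, j) | i <- iota 0 k.+1, j <- iota 0 k.+1].

(* duplicate-free list of all sequences of length <= k+1 of pairs with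
   entries <= k; it contains every element of S_k(m), since the m_j are
   strictly decreasing from k, and l_j <= m_j <= k. *)
Definition candidates (k : nat) : seq (seq (nat * nat)) :=
  flatten [seq allseqs (pairs k) t | t <- iota 0 k.+2].

Definition sk (k m : nat) : nat := count (inS k m) (candidates k).

(* s(m) = sum_{k>=0} s_k(m); for m > 0, s_k(m) = 0 when k >= m
   (any element of S_k(m) has m >= 2^k > k), so the sum is truncated at m. *)
Definition s (m : nat) : nat := if m == 0 then 1 else \sum_(k < m.+1) sk k m.

Definition geom (hi lo : nat) : nat := \sum_(lo <= i < hi.+1) 2 ^ i.

Definition bin (a : nat -> bool) (n : nat) : nat := \sum_(i < n) (a i : nat) * 2 ^ i.

From mathcomp Require Import all_boot zify.

(* Splitting off the leading pair (k, l), whose value is 2^k + ... + 2^(k-l), gives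
   s_k(n) = sum_j [2^k + ... + 2^j <= n] ntails k (n - (2^k + ... + 2^j)), where
   ntails k 0 = 1 (nothing follows) and ntails k r = sum_(i < k) s_i(r) for r > 0.  By induction on k,
   s_k(n) > 0 forces 2^k <= n <= 2^(k+2) - 2, so for 2^m <= n < 2^(m+1) only k = m and
   k = m - 1 contribute.  For k = m - 1 every leading block lies below n; for k = m and
   n = 2^m + ... + 2^l + A with 2 A < 2^l, exactly the blocks with j >= l fit. *)

Set Implicit Arguments.
Unset Strict Implicit.
Unset Printing Implicit Defensive.

Lemma count_allpairs (T1 T2 T3 : Type) (f : T1 -> T2 -> T3) (P : pred T3) A B :
  count P [seq f x y | x <- A, y <- B] = \sum_(x <- A) count (fun y => P (f x y)) B.
Proof.
elim: A => [|x A IH]; first by rewrite big_nil.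
by rewrite big_cons /= count_cat count_map IH.
Qed.

Lemma count_uniq_cover (T : eqType) (P : pred T) (s1 s2 : seq T) :
  uniq s1 -> uniq s2 -> {subset P <= s1} -> {subset P <= s2} ->
  count P s1 = count P s2.
Proof.
move=> u1 u2 Ps1 Ps2; rewrite -!size_filter; apply/perm_size/uniq_perm.
- exact: filter_uniq.
- exact: filter_uniq.
by move=> x; rewrite !mem_filter; case Px: (P x); rewrite //= (Ps1 _ Px) (Ps2 _ Px).
Qed.

Lemma sum_nat_eq_and (i b : nat) (c : bool) :
  \sum_(0 <= k < b) ((i == k) && c : nat) = (i < b) && c.
Proof.
elim: b => [|b IH]; first by rewrite big_geq.
rewrite big_nat_recr //= IH [i < b.+1]ltnS.
by case: (ltngtP i b); clear IH; case: c.
Qed.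

Lemma count_as_sum (T : Type) (a : pred T) s : count a s = \sum_(x <- s) a x.
Proof. by rewrite -sumn_count sumnE big_map. Qed.

Lemma sum_nat_gt0P b (F : nat -> nat) :
  0 < \sum_(0 <= j < b) F j -> exists2 j, j < b & 0 < F j.
Proof.
rewrite lt0n sum_nat_seq_neq0 => /hasP [j]; rewrite mem_index_iota => /andP [_ jb].
by exists j; rewrite // lt0n.
Qed.

Section AllSeqs.

Variable T : eqType.

Lemma size_mem_allseqs (A : seq T) n x : x \in allseqs A n -> size x = n.
Proof.
elim: n x => [|n IH] x /=; first by rewrite inE => /eqP ->.
by case/allpairsP => -[a y] /= [_ /IH <- ->].
Qed.

Lemma allseqs_uniq (A : seq T) n : uniq A -> uniq (allseqs A n).
Proof.
move=> uA; elim: n => [|n IH] //=.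
by apply: allpairs_uniq => // -[a x] [b y] _ _ /= [-> ->].
Qed.

Lemma mem_allseqs (A : seq T) x : all (mem A) x -> x \in allseqs A (size x).
Proof.
elim: x => [|a x IH] /=; first by rewrite inE.
by case/andP => aA /IH xA; apply/allpairsP; exists (a, x).
Qed.

End AllSeqs.

Lemma candidates_uniq K : uniq (candidates K).
Proof.
have pairs_uniq : uniq (pairs K).
  by apply: allpairs_uniq; rewrite ?iota_uniq // => -[a b] [c d] _ _ /= [-> ->].
rewrite /candidates; elim: (iota 0 K.+2) (iota_uniq 0 K.+2) => [|t ts IH] //=.
case/andP => tts /IH uts; rewrite cat_uniq allseqs_uniq // uts andbT.
apply/hasPn => x /flattenP [_ /mapP [t' t'ts ->] /size_mem_allseqs xt'].
by apply/negP => /size_mem_allseqs xt; rewrite -xt xt' t'ts in tts.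
Qed.

Lemma mem_candidates K x :
  size x <= K.+1 -> all (fun q : nat * nat => (q.1 <= K) && (q.2 <= K)) x ->
  x \in candidates K.
Proof.
move=> sx ax; apply/flattenP; exists (allseqs (pairs K) (size x)).
  by apply/mapP; exists (size x); rewrite // mem_iota.
apply: mem_allseqs; apply/allP => -[a b] /(allP ax) /andP [aK bK].
by apply/allpairsP; exists (a, b); rewrite !mem_iota.
Qed.

Definition gtfst : rel (nat * nat) := fun p q => q.1 < p.1.

Lemma gtfst_trans : transitive gtfst.
Proof. by move=> q p r /= pq qr; apply: ltn_trans qr pq. Qed.

Lemma size_sorted_gtfst b x :
  sorted gtfst x -> all (fun q : nat * nat => q.1 < b) x -> size x <= b.
Proof.
move=> sx xb; rewrite -(size_map fst) -[b](size_iota 0); apply: uniq_leq_size.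
  apply: (@sorted_uniq _ (fun i j => j < i)); last by rewrite sorted_map.
  - by move=> j i k ij jk; apply: ltn_trans jk ij.
  - exact: ltnn.
by move=> _ /mapP [q /(allP xb) qb ->]; rewrite mem_iota.
Qed.

Lemma all_fst_lt_sorted b q x :
  sorted gtfst (q :: x) -> all (fun p : nat * nat => p.1 < b) (q :: x) = (q.1 < b).
Proof.
rewrite /= path_sortedE; last exact: gtfst_trans.
case/andP => /allP xq _; case: ltnP => //= qb.
by apply/allP => p /xq /= pq; apply: ltn_trans pq qb.
Qed.

Lemma pair_val_gt0 q : 0 < pair_val q.
Proof. by rewrite /pair_val big_nat_recl // addn_gt0 expn_gt0. Qed.

Definition is_tail (b r : nat) (x : seq (nat * nat)) : bool :=
  [&& sorted gtfst x, all (fun q : nat * nat => q.1 < b) x,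
      all (fun q : nat * nat => q.2 <= q.1) x & r == sumn (map pair_val x)].

Definition ntails (b r : nat) : nat := if r == 0 then 1 else \sum_(0 <= k < b) sk k r.

Lemma ntailsE b r : 0 < r -> ntails b r = \sum_(0 <= k < b) sk k r.
Proof. by rewrite /ntails lt0n => /negbTE ->. Qed.

Lemma is_tail_candidates K b r x : b <= K.+1 -> is_tail b r x -> x \in candidates K.
Proof.
move=> bK /and4P [sx xb xv _]; apply: mem_candidates.
  exact: leq_trans (size_sorted_gtfst sx xb) bK.
by apply/allP => q qx; move: (allP xb q qx) (allP xv q qx) => /=; lia.
Qed.

Lemma inS_is_tail k n x : inS k n x -> is_tail k.+1 n x.
Proof.
case: x => [|q x]; first by rewrite /inS andbF.
rewrite /inS /= => /and5P [_ /eqP <- sx xv /eqP ->].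
by rewrite /is_tail all_fst_lt_sorted //= sx xv ltnSn eqxx.
Qed.

Lemma inS_cons k l n x :
  inS k n ((k, l) :: x) =
  [&& l <= k, pair_val (k, l) <= n & is_tail k (n - pair_val (k, l)) x].
Proof.
rewrite /inS /is_tail /= eqxx path_sortedE; last exact: gtfst_trans.
apply/idP/idP.
- case/and5P => [_ _ /andP [xk sx] /andP [lk xv] /eqP ->].
  by rewrite lk leq_addr addKn sx xk xv eqxx.
- case/and5P => [lk pvn sx xk /andP [xv /eqP xn]].
  by rewrite (leq_trans (pair_val_gt0 _) pvn) xk sx lk xv -xn subnKC //= eqxx.
Qed.

Lemma inS_candidates K k n x : k <= K -> inS k n x -> x \in candidates K.
Proof. by move=> kK /inS_is_tail; apply: is_tail_candidates. Qed.

Lemma is_tail_cons b r q x : 0 < r ->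
  is_tail b r (q :: x) = (q.1 < b) && inS q.1 r (q :: x).
Proof.
move=> r_gt0; rewrite /is_tail /inS r_gt0 eqxx.
case sx: (sorted gtfst (q :: x)); last by rewrite !andbF.
by rewrite all_fst_lt_sorted.
Qed.

Lemma count_is_tail K b r :
  b <= K.+1 -> count (is_tail b r) (candidates K) = ntails b r.
Proof.
move=> bK; rewrite /ntails; have [->|r0] := eqVneq r 0.
  rewrite (@eq_count _ _ (pred1 [::])).
    by rewrite count_uniq_mem ?candidates_uniq ?mem_candidates.
  case=> [|q x] //; rewrite /is_tail /= eq_sym addn_eq0 eqn0Ngt pair_val_gt0.
  by rewrite !andbF.
have tail_sum x : (is_tail b r x : nat) = \sum_(0 <= k < b) inS k r x.
  case: x => [|q x].
    by rewrite /is_tail /= (negbTE r0) big1 // => k _; rewrite /inS andbF.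
  have inS_head k : inS k r (q :: x) = (q.1 == k) && inS q.1 r (q :: x).
    by rewrite /inS /= eqxx andbCA.
  under eq_big_nat => k _ do rewrite inS_head.
  by rewrite sum_nat_eq_and is_tail_cons ?lt0n.
rewrite count_as_sum (eq_bigr _ (fun x _ => tail_sum x)) exchange_big /=.
apply: eq_big_nat => k /andP [_ kb]; rewrite -count_as_sum.
have kK : k <= K by rewrite -ltnS (leq_trans kb).
apply: count_uniq_cover; rewrite ?candidates_uniq // => x.
  exact: inS_candidates kK.
exact: inS_candidates (leqnn k).
Qed.

Lemma sk_first_pair k n :
  sk k n = \sum_(0 <= l < k.+1)
             (if pair_val (k, l) <= n then ntails k (n - pair_val (k, l)) else 0).
Proof.
pose V := [seq (k, l) :: x | l <- iota 0 k.+1, x <- candidates k].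
have V_uniq : uniq V.
  apply: allpairs_uniq; rewrite ?iota_uniq ?candidates_uniq //.
  by move=> [l x] [l' x'] _ _ /= [-> ->].
have V_cover x : inS k n x -> x \in V.
  case: x => [|[k' l] x] Sx; first by rewrite /inS andbF in Sx.
  have k'k : k' = k by move: Sx; rewrite /inS /= => /and3P [_ /eqP].
  move: Sx; rewrite k'k inS_cons => /and3P [lk _ xt].
  by apply/allpairsP; exists (l, x); rewrite mem_iota ltnS lk (is_tail_candidates _ xt).
rewrite /sk (count_uniq_cover (candidates_uniq k) V_uniq _ V_cover); last first.
  by move=> x; apply: inS_candidates (leqnn k).
rewrite count_allpairs /index_iota subn0; apply: eq_big_seq => l.
rewrite mem_iota ltnS => /andP [_ lk]; under eq_count do rewrite inS_cons lk.
by case: leqP => _ /=; [exact: count_is_tail | exact: count_pred0].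
Qed.

Lemma geom_add_pow h lo : lo <= h.+1 -> geom h lo + 2 ^ lo = 2 ^ h.+1.
Proof.
rewrite /geom; elim: h lo => [|h IH] lo.
  by case: lo => [|[|]] //= _; rewrite ?big_nat1 ?big_geq.
rewrite leq_eqVlt => /orP [/eqP ->|]; first by rewrite big_geq.
by rewrite ltnS => lo_h; rewrite big_nat_recr //= -addnAC IH // !expnS; lia.
Qed.

Lemma geomnn m : geom m m = 2 ^ m.
Proof. exact: big_nat1. Qed.

Lemma geom_bounds k j : j <= k -> 2 ^ k <= geom k j < 2 ^ k.+1.
Proof.
move=> jk; have := geom_add_pow (leqW jk).
have : 2 ^ j <= 2 ^ k by rewrite leq_exp2l.
by have := expn_gt0 2 j; rewrite expnS; lia.
Qed.

Lemma geom_split m j l : l <= j.+1 -> j <= m -> geom m l = geom m j.+1 + geom j l.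
Proof. by move=> lj jm; rewrite addnC /geom -big_cat_nat. Qed.

Lemma geom_add_bounds m l A : l <= m -> A < 2 ^ l -> 2 ^ m <= geom m l + A < 2 ^ m.+1.
Proof.
move=> lm hA; have := geom_add_pow (leqW lm); have /andP [g_lo _] := geom_bounds lm.
lia.
Qed.

Lemma pair_val_geom k l : l <= k -> pair_val (k, l) = geom k (k - l).
Proof.
move=> lk; rewrite /pair_val /geom /= -[k - l]add0n big_addn big_nat_rev.
have -> : k.+1 - (k - l) = l.+1 by lia.
by apply: eq_big_nat => p /andP [_ pl]; congr (2 ^ _); lia.
Qed.

Lemma sk_geom k n :
  sk k n = \sum_(0 <= j < k.+1)
             (if geom k j <= n then ntails k (n - geom k j) else 0).
Proof.
rewrite sk_first_pair big_nat_rev; apply: eq_big_nat => j /andP [_ jk].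
by rewrite add0n subSS pair_val_geom ?leq_subr // subKn // -ltnS.
Qed.

(* The leading block is below 2^(k+1) and, by induction, the rest is at most 2^(k+1) - 2. *)
Lemma sk_gt0_bounds k n : 0 < sk k n -> 2 ^ k <= n /\ n + 2 <= 2 ^ k.+2.
Proof.
elim/ltn_ind: k n => k IH n; rewrite sk_geom => /sum_nat_gt0P [j].
rewrite ltnS => jk; case: (leqP (geom k j) n) => //= gn tail_pos.
have /andP [g_lo g_hi] := geom_bounds jk.
have rest : n - geom k j + 2 <= 2 ^ k.+1.
  move: tail_pos; rewrite /ntails; case: ifP => [/eqP ->|_ /sum_nat_gt0P [i ik]].
    by rewrite expnS; have := expn_gt0 2 k; lia.
  case/IH => [//|_ /leq_trans]; apply; by rewrite leq_exp2l.
by rewrite !expnS in rest g_hi *; lia.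
Qed.

Lemma sk_eq0_outside m n k :
  2 ^ m <= n < 2 ^ m.+1 -> k <> m -> k <> m.-1 -> sk k n = 0.
Proof.
move=> /andP [n_lo n_hi] km km1; apply/eqP; rewrite eqn0Ngt; apply/negP.
case/sk_gt0_bounds => k_lo k_hi; case: (ltngtP k m) => [km'|mk|//].
- have : 2 ^ k.+2 <= 2 ^ m by rewrite leq_exp2l //; lia.
  lia.
- have : 2 ^ m.+1 <= 2 ^ k by rewrite leq_exp2l.
  lia.
Qed.

Lemma sk_pred_sum m n : 0 < m -> 2 ^ m <= n ->
  sk m.-1 n = \sum_(0 <= j < m) \sum_(0 <= k < m.-1) sk k (n - geom m.-1 j).
Proof.
move=> m_gt0 n_lo; rewrite sk_geom prednK //; apply: eq_big_nat => j /andP [_ jm].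
have /andP [_ g_hi] : 2 ^ m.-1 <= geom m.-1 j < 2 ^ m.-1.+1.
  by apply: geom_bounds; rewrite -ltnS prednK.
have g_lt : geom m.-1 j < n by rewrite (leq_trans g_hi) ?prednK.
by rewrite (ltnW g_lt) ntailsE // subn_gt0.
Qed.

Lemma sk_except_top m n : 0 < m -> 2 ^ m <= n < 2 ^ m.+1 ->
  sk m.-1 n = \sum_(0 <= j < m) \sum_(0 <= k < m.-1) sk k (n - geom m.-1 j) /\
  forall k, k <> m -> k <> m.-1 -> sk k n = 0.
Proof.
move=> m_gt0 n_range; have /andP [n_lo _] := n_range.
by split=> [|k]; [exact: sk_pred_sum | exact: sk_eq0_outside].
Qed.

(* A block geom m j with j < l overshoots because 2 A < 2^l; the block j = l leaves A and
   the block j + 1 > l leaves geom j l + A. *)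
Lemma sk_geom_add m l A : l <= m -> 2 * A < 2 ^ l ->
  sk m (geom m l + A) =
  ntails m A + \sum_(l <= j < m) \sum_(0 <= k < m) sk k (geom j l + A).
Proof.
move=> lm hA; rewrite sk_geom (@big_cat_nat _ _ _ l) //= ?(leqW lm) //.
rewrite big1_seq ?add0n => [|j]; last first.
  rewrite mem_index_iota => /andP [_ jl]; rewrite ifN //.
  have := geom_add_pow (leqW lm); have := geom_add_pow (leq_trans (ltnW jl) (leqW lm)).
  have : 2 * 2 ^ j <= 2 ^ l by rewrite -expnS leq_exp2l.
  lia.
rewrite big_nat_recl ?ltnS // leq_addr addKn; congr (_ + _).
apply: eq_big_nat => j /andP [lj jm].
have /andP [gj_lo _] := geom_bounds lj.
rewrite (geom_split (leqW lj) (ltnW jm)) -addnA leq_addr addKn ntailsE //.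
by have := expn_gt0 2 j; lia.
Qed.

Lemma sk_pow2 m : sk m (2 ^ m) = 1.
Proof.
by rewrite -geomnn -[geom m m]addn0 sk_geom_add ?expn_gt0 // big_geq.
Qed.

Lemma sk_geom_add_pos m l A : l <= m -> 0 < A -> 2 * A < 2 ^ l ->
  sk m (geom m l + A) =
  \sum_(0 <= k < m) sk k A + \sum_(l <= j < m) \sum_(0 <= k < m) sk k (geom j l + A).
Proof. by move=> lm A_gt0 hA; rewrite sk_geom_add // ntailsE. Qed.

Lemma double_bin_lt (a : nat -> bool) n : 2 * bin a n < 2 ^ n.+1.
Proof.
rewrite expnS ltn_mul2l /= /bin -(big_mkord xpredT (fun i => a i * 2 ^ i)).
elim: n => [|n IH]; first by rewrite big_geq.
rewrite big_nat_recr //= expnS.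
have : a n * 2 ^ n <= 2 ^ n by case: (a n); rewrite ?mul1n ?mul0n.
lia.
Qed.

Lemma bin_gt0 (a : nat -> bool) n i : i < n -> a i -> 0 < bin a n.
Proof.
move=> ilt ai; rewrite /bin (bigD1 (Ordinal ilt)) //= ai mul1n.
by rewrite addn_gt0 expn_gt0.
Qed.
Lemma bin_pred_bounds (a : nat -> bool) l : 0 < l -> (exists i, i < l.-1 /\ a i) ->
  0 < bin a l.-1 /\ 2 * bin a l.-1 < 2 ^ l.
Proof.
by move=> l_gt0 [i [il ai]]; rewrite (bin_gt0 il ai) -{2}(prednK l_gt0) double_bin_lt.
Qed.

Theorem theorem4p6 :
  (* (i) *)
  s 0 = 1 /\
  (* (ii) *)
  (sk 0 1 = 1 /\ forall k, 0 < k -> sk k 1 = 0) /\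
  (* (iii) *)
  (sk 0 2 = 0 /\ sk 1 2 = 1 /\ forall k, 1 < k -> sk k 2 = 0) /\
  (* (iv) *)
  (forall m, 1 <= m ->
     sk m (2 ^ m) = 1 /\
     sk m.-1 (2 ^ m) =
       \sum_(0 <= j < m) \sum_(0 <= k < m.-1) sk k (2 ^ m - geom m.-1 j) /\
     forall k, k <> m -> k <> m.-1 -> sk k (2 ^ m) = 0) /\
  (* (v) *)
  (forall m l, 1 <= m -> l < m ->
     sk m (geom m l) = 1 + \sum_(l <= j < m) \sum_(0 <= k < m) sk k (geom j l) /\
     sk m.-1 (geom m l) =
       \sum_(0 <= j < m) \sum_(0 <= k < m.-1) sk k (geom m l - geom m.-1 j) /\
     forall k, k <> m -> k <> m.-1 -> sk k (geom m l) = 0) /\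
  (* (vi) *)
  (forall m l (a : nat -> bool), 2 <= l -> l < m ->
     (exists i, i < l.-1 /\ a i) ->
     sk m (geom m l + bin a l.-1) =
       \sum_(0 <= k < m) sk k (bin a l.-1)
       + \sum_(l <= j < m) \sum_(0 <= k < m) sk k (geom j l + bin a l.-1) /\
     sk m.-1 (geom m l + bin a l.-1) =
       \sum_(0 <= j < m) \sum_(0 <= k < m.-1)
          sk k (geom m l + bin a l.-1 - geom m.-1 j) /\
     forall k, k <> m -> k <> m.-1 -> sk k (geom m l + bin a l.-1) = 0) /\
  (* (vii) *)
  (forall m (a : nat -> bool), 1 < m ->
     (exists i, i < m.-1 /\ a i) ->
     sk m (2 ^ m + bin a m.-1) = \sum_(0 <= k < m) sk k (bin a m.-1) /\
     sk m.-1 (2 ^ m + bin a m.-1) =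
       \sum_(0 <= j < m) \sum_(0 <= k < m.-1)
          sk k (2 ^ m + bin a m.-1 - geom m.-1 j) /\
     forall k, k <> m -> k <> m.-1 -> sk k (2 ^ m + bin a m.-1) = 0).
Proof.
split; first by [].
split.
  split; first exact: (sk_pow2 0).
  by move=> k k_gt0; apply: (@sk_eq0_outside 0); lia.
split.
  split; first by rewrite (@sk_pred_sum 1) // big_nat1 big_geq.
  split; first exact: (sk_pow2 1).
  by move=> k k_gt1; apply: (@sk_eq0_outside 1); lia.
split.
  move=> m m_gt0; split; first exact: sk_pow2.
  by apply: sk_except_top => //; rewrite expnS; have := expn_gt0 2 m; lia.
split.
  move=> m l m_gt0 lm; split; last by apply: sk_except_top => //; apply/geom_bounds/ltnW.
  rewrite -[geom m l]addn0 sk_geom_add ?(ltnW lm) ?muln0 ?expn_gt0 //; congr (_ + _).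
  by apply: eq_bigr => j _; apply: eq_bigr => k _; rewrite addn0.
split.
  move=> m l a l_ge2 lm /(@bin_pred_bounds _ l) [|A_gt0 hA]; first lia.
  split; first exact: sk_geom_add_pos (ltnW lm) A_gt0 hA.
  by apply: sk_except_top; [lia | apply: geom_add_bounds; lia].
move=> m a m_gt1 /(@bin_pred_bounds _ m) [|B_gt0 hB]; first lia.
split; first by rewrite -geomnn sk_geom_add_pos // [X in _ + X]big_geq ?addn0.
by apply: sk_except_top; [lia | rewrite expnS; lia].
Qed.
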